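(* Let $\Gamma$ be a finite set equipped with a product probability measure on $2^\Gamma$. Let $\{B_{ij}\}$ be a finite family of increasing events indexed by pairs $(i,j)$, and set $B_i=\bigcup_j B_{ij}$. Write $(i,j)\sim(k,l)$ if $B_{ij}$ and $B_{kl}$ are not independent; by convention $(i,j)\sim(i,j)$. Let $I_{ij},I_i$ be the indicators of $B_{ij},B_i$. Set \[ X=\sum_i I_i,\qquad \mu=\sum_{i,j}\mathbb E I_{ij}, \] \[ \bar\Theta=\sum_{i,j}\sum_k\Pr\Big(B_{ij}\cap\bigcup_l\{B_{kl}:(k,l)\sim(i,j)\}\Big), \] \[ \bar\Delta=\sum\sum\{\mathbb E I_{ij}I_{kl}:(i,j)\sim(k,l)\}, \] \[ \gamma=\sum_i\sum_{\{j,k\}}\mathbb E I_{ij}I_{ik}, \] where the last inner sum is over unordered pairs $\{j,k\}$ with $j\ne k$. Assume $\mu>0$. Then for every $t\in[\gamma,\mu]$, \[ \Pr(X\le\mu-t)\le\exp\Big[-\frac{(t-\gamma)^2}{2\bar\Theta}\Big]\le\exp\Big[-\frac{(t-\gamma)^2}{2\bar\Delta}\Big]. \]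
   Context: An event $B\subseteq 2^\Gamma$ is increasing if $A\in B$ and $A\subseteq A'$ imply $A'\in B$. *)

From Stdlib Require Import Reals.
From mathcomp Require Import all_boot.
Set Implicit Arguments. Unset Strict Implicit. Unset Printing Implicit Defensive.

Local Open Scope R_scope.

Section Defs.
Variable G : finType.

Definition event := {set {set G}}.

(* Product probability measure on 2^Gamma: each x in Gamma is included
   independently with probability p x. Weight of an outcome A. *)
Definition weight (p : G -> R) (A : {set G}) : R :=
  \big[Rmult/1]_(x : G) (if x \in A then p x else 1 - p x).

Definition Pr (p : G -> R) (E : event) : R :=
  \big[Rplus/0]_(A : {set G} | A \in E) weight p A.

Definition increasing_event (E : event) : Prop :=
  forall A A' : {set G}, A \in E -> A \subset A' -> A' \in E.

Definition independent (p : G -> R) (E F : event) : Prop :=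
  Pr p (E :&: F) = Pr p E * Pr p F.

Definition dependentb (p : G -> R) (E F : event) : bool :=
  if Req_EM_T (Pr p (E :&: F)) (Pr p E * Pr p F) then false else true.

Variables (I J : finType) (p : G -> R) (B : I -> J -> event).

Definition rel_dep (i : I) (j : J) (k : I) (l : J) : bool :=
  ((i == k) && (j == l)) || dependentb p (B i j) (B k l).

Definition Bi (i : I) : event := \bigcup_(j : J) B i j.

Definition Xval (A : {set G}) : R := INR #|[set i : I | A \in Bi i]|.

Definition mu : R := \big[Rplus/0]_(i : I) \big[Rplus/0]_(j : J) Pr p (B i j).

Definition Theta_bar : R :=
  \big[Rplus/0]_(i : I) \big[Rplus/0]_(j : J) \big[Rplus/0]_(k : I)
    Pr p (B i j :&: \bigcup_(l : J | rel_dep i j k l) B k l).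

Definition Delta_bar : R :=
  \big[Rplus/0]_(i : I) \big[Rplus/0]_(j : J) \big[Rplus/0]_(k : I)
    \big[Rplus/0]_(l : J | rel_dep i j k l) Pr p (B i j :&: B k l).

(* sum over unordered pairs {j,k}, j <> k = half the sum over ordered pairs *)
Definition gamma : R :=
  \big[Rplus/0]_(i : I)
    (/ 2 * \big[Rplus/0]_(j : J) \big[Rplus/0]_(k : J | k != j)
       Pr p (B i j :&: B i k)).

Definition lower_tail (t : R) : event := [set A : {set G} | (if Rle_dec (Xval A) (mu - t) then true else false)].
End Defs.

From HB Require Import structures.
From Stdlib Require Import Reals Lra Classical.
From mathcomp Require Import all_boot.
Set Implicit Arguments. Unset Strict Implicit. Unset Printing Implicit Defensive.
Local Open Scope R_scope.

(* Let psi s := E exp (- s X).  Then - psi' s = E [X exp (- s X)] = sum_i E [I_i exp (- s X)],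
   and the second Bonferroni inequality bounds I_i below by
   sum_j I_ij - sum_{j<k} I_ij I_ik.  For fixed (i,j), split X into the events
   dependent on B_ij and the rest V.  Independent increasing events of a product
   measure have no common pivotal coordinate (a strict form of Harris'
   inequality), so I_ij is independent of exp (- s V); Harris' inequality and
   1 - x <= exp (- x) handle the remaining terms.  This yields
   - psi' >= psi (mu - gamma - s Theta_bar); integrating gives
   psi s <= exp (- (mu - gamma) s + Theta_bar s^2 / 2), and Markov's inequality
   with s = (t - gamma) / Theta_bar concludes.  Theta_bar >= mu > 0 because
   (i,j) ~ (i,j), and Theta_bar <= Delta_bar is a union bound. *)

HB.instance Definition _ := Monoid.isComLaw.Build R 0 Rplus
  (fun a b c => esym (Rplus_assoc a b c)) Rplus_comm Rplus_0_l.
HB.instance Definition _ := Monoid.isComLaw.Build R 1 Rmult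
  (fun a b c => esym (Rmult_assoc a b c)) Rmult_comm Rmult_1_l.
HB.instance Definition _ := Monoid.isMulLaw.Build R 0 Rmult Rmult_0_l Rmult_0_r.
HB.instance Definition _ :=
  Monoid.isAddLaw.Build R Rmult Rplus Rmult_plus_distr_r Rmult_plus_distr_l.

Lemma sumR_le (T : Type) (r : seq T) (P : pred T) (F H : T -> R) :
  (forall i, P i -> F i <= H i) ->
  \big[Rplus/0]_(i <- r | P i) F i <= \big[Rplus/0]_(i <- r | P i) H i.
Proof. by move=> FH; apply: (big_ind2 (fun x y => x <= y)) => // *; lra. Qed.

Lemma sumR_ge0 (T : Type) (r : seq T) (P : pred T) (F : T -> R) :
  (forall i, P i -> 0 <= F i) -> 0 <= \big[Rplus/0]_(i <- r | P i) F i.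
Proof. by move=> F0; apply: (big_ind (fun x => 0 <= x)) => // *; lra. Qed.

Lemma sumR_mull (T : Type) (r : seq T) (P : pred T) (c : R) (F : T -> R) :
  \big[Rplus/0]_(i <- r | P i) (c * F i) = c * \big[Rplus/0]_(i <- r | P i) F i.
Proof. by rewrite big_distrr. Qed.

Lemma exp_le x y : x <= y -> exp x <= exp y.
Proof. by case/Rle_lt_or_eq_dec => [/exp_increasing/Rlt_le | ->]; [|right]. Qed.

Section ProductExpectation.
Variables (G : finType) (p : G -> R).
Hypothesis hp : forall x, 0 <= p x <= 1.

Definition Ex (h : {set G} -> R) : R :=
  \big[Rplus/0]_(A : {set G}) (weight p A * h A).

(* [Epart s h w] is the expectation of [h] when the coordinates listed in [s]
   are resampled independently and all other coordinates are read off [w]. *)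
Fixpoint Epart (s : seq G) (h : {set G} -> R) (w : {set G}) : R :=
  match s with
  | [::] => h w
  | x :: s' => p x * Epart s' h (x |: w) + (1 - p x) * Epart s' h (w :\ x)
  end.

Definition coord_factor (y : G) (T : {set G}) : R :=
  if y \in T then p y else 1 - p y.

Definition part_weight (s : seq G) (w T : {set G}) : R :=
  if T :\: [set y in s] == w :\: [set y in s]
  then \big[Rmult/1]_(y <- s) coord_factor y T else 0.

Lemma part_weight_cons x s w T : x \notin s ->
  part_weight (x :: s) w T =
  p x * part_weight s (x |: w) T + (1 - p x) * part_weight s (w :\ x) T.
Proof.
move=> xs; rewrite /part_weight big_cons /coord_factor.
have setE (U V : {set G}) : (U == V) = [forall y, (y \in U) == (y \in V)].
  by apply/eqP/forallP => [-> //|UV]; apply/setP => y; apply/eqP.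
rewrite !setE; case xT: (x \in T).
- have -> : [forall y, (y \in T :\: [set y0 in s]) ==
                        (y \in (w :\ x) :\: [set y0 in s])] = false.
    by apply/negbTE/negP => /forallP /(_ x); rewrite !inE eqxx xT (negbTE xs).
  have -> : [forall y, (y \in T :\: [set y0 in x :: s]) ==
                        (y \in w :\: [set y0 in x :: s])] =
            [forall y, (y \in T :\: [set y0 in s]) ==
                        (y \in (x |: w) :\: [set y0 in s])].
    apply/forallP/forallP => H y; have := H y; rewrite !inE;
    by case: (eqVneq y x) => [->|ne]; rewrite ?xT ?(negbTE xs).
  by case: ifP => _; ring.
- have -> : [forall y, (y \in T :\: [set y0 in s]) ==
                        (y \in (x |: w) :\: [set y0 in s])] = false.
    by apply/negbTE/negP => /forallP /(_ x); rewrite !inE eqxx xT (negbTE xs).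
  have -> : [forall y, (y \in T :\: [set y0 in x :: s]) ==
                        (y \in w :\: [set y0 in x :: s])] =
            [forall y, (y \in T :\: [set y0 in s]) ==
                        (y \in (w :\ x) :\: [set y0 in s])].
    apply/forallP/forallP => H y; have := H y; rewrite !inE;
    by case: (eqVneq y x) => [->|ne]; rewrite ?xT ?(negbTE xs).
  by case: ifP => _; ring.
Qed.

Lemma Epart_part_weight s h w : uniq s ->
  Epart s h w = \big[Rplus/0]_(A : {set G}) (part_weight s w A * h A).
Proof.
elim: s w => [|x s IH] w /=.
  move=> _; rewrite (bigD1 w) //= big1 => [|T /negbTE Tw].
    by rewrite /part_weight !setD0 eqxx big_nil; ring.
  by rewrite /part_weight !setD0 Tw; ring.
case/andP => xs us; rewrite !IH // !big_distrr -big_split /=.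
by apply: eq_bigr => T _; rewrite part_weight_cons //; ring.
Qed.

Lemma Ex_Epart s h w : uniq s -> (forall y, y \in s) -> Ex h = Epart s h w.
Proof.
move=> us alls; rewrite Epart_part_weight //; apply: eq_bigr => T _.
rewrite /part_weight.
have -> : [set y in s] = setT by apply/setP => y; rewrite !inE alls.
rewrite !setDT eqxx; congr (_ * _).
apply: perm_big; apply: uniq_perm => //; first exact: index_enum_uniq.
by move=> y; rewrite alls mem_index_enum.
Qed.

Lemma Ex_Epart_enum h : Ex h = Epart (index_enum G) h set0.
Proof. exact: Ex_Epart (index_enum_uniq G) (@mem_index_enum G). Qed.

Lemma Epart_lin s c1 c2 h1 h2 w :
  Epart s (fun a => c1 * h1 a + c2 * h2 a) w = c1 * Epart s h1 w + c2 * Epart s h2 w.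
Proof. by elim: s w => [|x s IH] w //=; rewrite !IH; ring. Qed.

Lemma Epart_const s c w : Epart s (fun _ => c) w = c.
Proof. by elim: s w => [|x s IH] w //=; rewrite !IH; ring. Qed.

Lemma eq_Epart s h1 h2 w : h1 =1 h2 -> Epart s h1 w = Epart s h2 w.
Proof. by move=> eq_h; elim: s w => [|x s IH] w /=; rewrite ?IH. Qed.

Definition incr_fun (f : {set G} -> R) := forall a b : {set G}, a \subset b -> f a <= f b.
Definition decr_fun (f : {set G} -> R) := forall a b : {set G}, a \subset b -> f b <= f a.

Lemma Epart_incr s f (w w' : {set G}) : incr_fun f -> w \subset w' -> Epart s f w <= Epart s f w'.
Proof.
move=> hf; elim: s w w' => [|x s IH] w w' /= ww'; first exact: hf.
have := hp x => hx; apply: Rplus_le_compat; apply: Rmult_le_compat_l; try lra.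
  by apply: IH; apply: setUS.
by apply: IH; apply: setSD.
Qed.

Lemma Epart_decr s f (w w' : {set G}) : decr_fun f -> w \subset w' -> Epart s f w' <= Epart s f w.
Proof.
move=> hf; elim: s w w' => [|x s IH] w w' /= ww'; first exact: hf.
have := hp x => hx; apply: Rplus_le_compat; apply: Rmult_le_compat_l; try lra.
  by apply: IH; apply: setUS.
by apply: IH; apply: setSD.
Qed.

Lemma subD1U (x : G) (w : {set G}) : w :\ x \subset x |: w.
Proof. by apply/subsetP => y; rewrite !inE => /andP [_ ->]; rewrite orbT. Qed.

Lemma two_point_cov_le0 q F1 F0 G1 G0 : 0 <= q <= 1 -> F0 <= F1 -> G1 <= G0 ->
  q * (F1 * G1) + (1 - q) * (F0 * G0) <=
  (q * F1 + (1 - q) * F0) * (q * G1 + (1 - q) * G0).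
Proof.
move=> hq hF hG.
have : 0 <= q * (1 - q) * ((F1 - F0) * (G0 - G1)) by apply: Rmult_le_pos; nra.
nra.
Qed.

Lemma harris_Epart s f g w : incr_fun f -> decr_fun g ->
  Epart s (fun a => f a * g a) w <= Epart s f w * Epart s g w.
Proof.
move=> hf hg; elim: s w => [|x s IH] w /=; first lra.
apply: Rle_trans; last apply: two_point_cov_le0 => //.
- have := hp x => hx.
  by apply: Rplus_le_compat; apply: Rmult_le_compat_l; try lra; apply: IH.
- exact: Epart_incr (subD1U x w).
- exact: Epart_decr (subD1U x w).
Qed.

Lemma harris_Epart_incr s f g w : incr_fun f -> incr_fun g ->
  Epart s f w * Epart s g w <= Epart s (fun a => f a * g a) w.
Proof.
move=> hf hg.
have hg' : decr_fun (fun a => -1 * g a + 0 * g a).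
  by move=> a b ab; have := hg a b ab; lra.
have := harris_Epart s w hf hg'; rewrite Epart_lin.
rewrite (@eq_Epart s _ (fun a => -1 * (f a * g a) + 0 * (f a * g a))) ?Epart_lin.
  by lra.
by move=> a; ring.
Qed.

Lemma harris f g : incr_fun f -> decr_fun g -> Ex (fun a => f a * g a) <= Ex f * Ex g.
Proof. by move=> hf hg; rewrite !Ex_Epart_enum; apply: harris_Epart. Qed.

End ProductExpectation.

Lemma setU1D1C (T : finType) (x y : T) (w : {set T}) :
  x != y -> (x |: w) :\ y = x |: (w :\ y).
Proof.
move=> xy; apply/setP => z; rewrite !inE.
by case: (eqVneq z x) => [->|_]; rewrite ?(negbTE xy).
Qed.

Lemma setD1C (T : finType) (x y : T) (w : {set T}) : (w :\ x) :\ y = (w :\ y) :\ x.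
Proof. by apply/setP => z; rewrite !inE; case: (z == x); case: (z == y). Qed.

Lemma setU1D1 (T : finType) (x : T) (a : {set T}) : (x |: a) :\ x = a :\ x.
Proof. by apply/setP => z; rewrite !inE; case: (z == x). Qed.

Section Independence.
Variables (G : finType) (p : G -> R).
Hypothesis hp : forall x, 0 <= p x <= 1.
Local Notation Epart := (Epart p).
Local Notation Ex := (Ex p).

(* Exactly the outcomes of positive probability. *)
Definition supported_at (y : G) (w : {set G}) :=
  (p y = 1 -> y \in w) /\ (p y = 0 -> y \notin w).
Definition supported (w : {set G}) := forall y, supported_at y w.

Lemma supported_atU z y w :
  (z = y -> p y <> 0) -> (z <> y -> supported_at z w) -> supported_at z (y |: w).
Proof.
case: (eqVneq z y) => [->|/eqP ne] H1 H2.
  by split => h; [rewrite setU11 | have := H1 erefl].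
have [a b] := H2 ne; split => h; rewrite !inE.
  by rewrite a ?orbT.
by rewrite (introF eqP ne) b.
Qed.

Lemma supported_atD z y w :
  (z = y -> p y <> 1) -> (z <> y -> supported_at z w) -> supported_at z (w :\ y).
Proof.
case: (eqVneq z y) => [->|/eqP ne] H1 H2.
  by split => h; [have := H1 erefl | rewrite setD11].
have [a b] := H2 ne; split => h; rewrite !inE (introF eqP ne).
  by rewrite a.
by rewrite b.
Qed.

Lemma Epart_flip s f x w : x \notin s -> 0 < p x < 1 ->
  (forall a, supported a -> f (x |: a) = f (a :\ x)) ->
  (forall y, y \notin s -> y <> x -> supported_at y w) ->
  Epart s f (x |: w) = Epart s f (w :\ x).
Proof.
move=> + hx hf; elim: s w => [|y s IH] w /=.
  move=> _ H; apply: hf => z; case: (eqVneq z x) => [->|/eqP ne]; last exact: H.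
  by split => h; lra.
rewrite inE negb_or => /andP [xy xs] H.
have yx : y != x by rewrite eq_sym.
have Hs z : z \notin s -> z <> x -> z <> y -> supported_at z w.
  by move=> zs zx zy; apply: H => //; rewrite inE negb_or zs andbT; apply/eqP.
rewrite setUCA (setU1D1C _ xy) -(setU1D1C _ yx) (setD1C x y).
(* Branches of probability zero may leave the support. *)
have mul_eq (q a b : R) : (q <> 0 -> a = b) -> q * a = q * b.
  by move=> Hq; case: (Req_EM_T q 0) => [-> | /Hq ->]; ring.
congr (_ + _); apply: mul_eq => hy; apply: IH => // z zs zx.
  by apply: supported_atU => [_|zy] //; apply: Hs.
by apply: supported_atD => [_|zy]; [lra | apply: Hs].
Qed.

Lemma Epart_mul s f g w : uniq s ->
  (forall y, y \notin s -> supported_at y w) ->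
  (forall x, x \in s -> 0 < p x < 1 ->
     (forall a, supported a -> f (x |: a) = f (a :\ x)) \/
     (forall a, supported a -> g (x |: a) = g (a :\ x))) ->
  Epart s (fun a => f a * g a) w = Epart s f w * Epart s g w.
Proof.
elim: s w => [|x s IH] w //= /andP [xs us] Hw Hx.
have Hs : forall y, y \in s -> 0 < p y < 1 ->
     (forall a, supported a -> f (y |: a) = f (a :\ y)) \/
     (forall a, supported a -> g (y |: a) = g (a :\ y)).
  by move=> y ys; apply: Hx; rewrite inE ys orbT.
have Hw' y : y \notin s -> y <> x -> supported_at y w.
  by move=> ys yx; apply: Hw; rewrite inE negb_or ys andbT; apply/eqP.
have HU : p x <> 0 -> forall y, y \notin s -> supported_at y (x |: w).
  by move=> hx0 y ys; apply: supported_atU => [_|yx] //; apply: Hw'.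
have HD : p x <> 1 -> forall y, y \notin s -> supported_at y (w :\ x).
  by move=> hx1 y ys; apply: supported_atD => [_|yx] //; apply: Hw'.
have := hp x => hx.
case: (Req_EM_T (p x) 0) => [h0|n0].
  by rewrite h0 (IH (w :\ x)) //; [ring | apply: HD; lra].
case: (Req_EM_T (p x) 1) => [h1|n1].
  by rewrite h1 (IH (x |: w)) //; [ring | apply: HU].
rewrite !IH //; try (apply: HU || apply: HD); auto.
have hx' : 0 < p x < 1 by lra.
by case: (Hx x (mem_head _ _) hx') => H; rewrite (Epart_flip xs hx' H Hw'); ring.
Qed.

Lemma Epart_shiftU x s h w : x \notin s ->
  Epart s (fun a => h (x |: a)) w = Epart s h (x |: w).
Proof.
elim: s w => [|y s IH] w //=; rewrite inE negb_or => /andP [xy xs].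
by rewrite !IH // setUCA (setU1D1C _ xy).
Qed.

Lemma Epart_shiftD x s h w : x \notin s ->
  Epart s (fun a => h (a :\ x)) w = Epart s h (w :\ x).
Proof.
elim: s w => [|y s IH] w //=; rewrite inE negb_or => /andP [xy xs].
have yx : y != x by rewrite eq_sym.
by rewrite !IH // (setU1D1C _ yx) (setD1C y x).
Qed.

Lemma Ex_mul f g :
  (forall x, 0 < p x < 1 ->
     (forall a, supported a -> f (x |: a) = f (a :\ x)) \/
     (forall a, supported a -> g (x |: a) = g (a :\ x))) ->
  Ex (fun a => f a * g a) = Ex f * Ex g.
Proof.
move=> H; rewrite !Ex_Epart_enum.
apply: Epart_mul => [|y|x _]; rewrite ?index_enum_uniq ?mem_index_enum //.
exact: H.
Qed.

Definition indic (E : event G) (a : {set G}) : R := if a \in E then 1 else 0.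

Lemma Pr_Ex E : Pr p E = Ex (indic E).
Proof.
rewrite /Pr /Ex big_mkcond /=; apply: eq_bigr => A _.
by rewrite /indic; case: ifP => _; ring.
Qed.

Lemma indic_setI E F a : indic (E :&: F) a = indic E a * indic F a.
Proof. by rewrite /indic inE; case: (a \in E); case: (a \in F) => /=; ring. Qed.

Lemma indic_ge0 E a : 0 <= indic E a.
Proof. by rewrite /indic; case: ifP => _; lra. Qed.

Lemma indic_incr E : increasing_event E -> incr_fun (indic E).
Proof.
move=> hE a b ab; rewrite /indic; case: ifP => ha; first by rewrite (hE _ _ ha ab); lra.
by case: ifP => _; lra.
Qed.

Lemma weight_ge0 A : 0 <= weight p A.
Proof.
rewrite /weight; apply: (big_ind (fun x => 0 <= x)) => [|a b|y _]; first lra.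
  exact: Rmult_le_pos.
by have := hp y; case: ifP => _; lra.
Qed.

Lemma weight_gt0 A : supported A -> 0 < weight p A.
Proof.
move=> sA; rewrite /weight; apply: (big_ind (fun x => 0 < x)) => [|a b|y _]; first lra.
  exact: Rmult_lt_0_compat.
have := hp y; have [a b] := sA y; case: ifP => yA hy.
  by case: (Req_EM_T (p y) 0) => [/b|]; [rewrite yA | lra].
by case: (Req_EM_T (p y) 1) => [/a|]; [rewrite yA | lra].
Qed.

Lemma Ex_lin c1 c2 h1 h2 :
  Ex (fun a => c1 * h1 a + c2 * h2 a) = c1 * Ex h1 + c2 * Ex h2.
Proof.
rewrite /Ex !big_distrr -big_split /=.
by apply: eq_bigr => A _; ring.
Qed.

Lemma eq_Ex h1 h2 : h1 =1 h2 -> Ex h1 = Ex h2.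
Proof. by move=> H; apply: eq_bigr => A _; rewrite H. Qed.

Lemma Ex_Zl c h : Ex (fun a => c * h a) = c * Ex h.
Proof. by rewrite /Ex -sumR_mull; apply: eq_bigr => A _; ring. Qed.

Lemma Ex_subZ c h1 h2 : Ex (fun a => h1 a - c * h2 a) = Ex h1 - c * Ex h2.
Proof.
rewrite (@eq_Ex _ (fun a => 1 * h1 a + (- c) * h2 a)) ?Ex_lin => [|a]; ring.
Qed.

Lemma Ex_le h1 h2 : (forall a, h1 a <= h2 a) -> Ex h1 <= Ex h2.
Proof.
move=> H; apply: sumR_le => A _.
by apply: Rmult_le_compat_l; [apply: weight_ge0 | apply: H].
Qed.

Lemma Ex_ge0 h : (forall a, 0 <= h a) -> 0 <= Ex h.
Proof.
by move=> H; apply: sumR_ge0 => A _; apply: Rmult_le_pos; [apply: weight_ge0 | apply: H].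
Qed.

Lemma Ex_gt0 h w : (forall a, 0 <= h a) -> supported w -> 0 < h w -> 0 < Ex h.
Proof.
move=> h0 sw hw; rewrite /Ex (bigD1 w) //=.
apply: Rplus_lt_le_0_compat; first by apply: Rmult_lt_0_compat => //; apply: weight_gt0.
by apply: sumR_ge0 => A _; apply: Rmult_le_pos; [apply: weight_ge0 | apply: h0].
Qed.

Lemma Ex_const c : Ex (fun _ => c) = c.
Proof. by rewrite Ex_Epart_enum Epart_const. Qed.

Lemma Ex_sum (K : finType) (P : pred K) (F : K -> {set G} -> R) :
  Ex (fun a => \big[Rplus/0]_(k | P k) F k a) = \big[Rplus/0]_(k | P k) Ex (F k).
Proof.
rewrite /Ex (eq_bigr (fun A => \big[Rplus/0]_(k | P k) (weight p A * F k A))).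
  exact: exchange_big.
by move=> A _; rewrite big_distrr.
Qed.

Lemma Pr_ge0 E : 0 <= Pr p E.
Proof. by rewrite Pr_Ex; apply: Ex_ge0 => a; apply: indic_ge0. Qed.

Definition pivotal (E : event G) x :=
  exists w, supported w /\ x |: w \in E /\ w :\ x \notin E.

Lemma not_pivotal_flip E x : increasing_event E -> ~ pivotal E x ->
  forall a, supported a -> (x |: a \in E) = (a :\ x \in E).
Proof.
move=> hE npiv a sa; apply/idP/idP => [h|h]; last exact: hE _ _ h (subD1U x a).
by apply/negPn/negP => h'; apply: npiv; exists a.
Qed.

Lemma pivotal_gain E x s : increasing_event E -> pivotal E x ->
  uniq (x :: s) -> (forall y, y \in x :: s) ->
  0 < Epart s (indic E) (x |: set0) - Epart s (indic E) set0.
Proof.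
move=> hE [w [sw [w1 w2]]] us alls.
have xs : x \notin s by case/andP: us.
set D := fun a => 1 * indic E (x |: a) + (-1) * indic E (a :\ x).
have -> : Epart s (indic E) (x |: set0) - Epart s (indic E) set0 = Epart s D set0.
  by rewrite /D Epart_lin Epart_shiftU // Epart_shiftD // set0D; ring.
have -> : Epart s D set0 = Ex D.
  rewrite (Ex_Epart p _ set0 us alls) /= set0D -(Epart_shiftU _ _ xs).
  by rewrite (eq_Epart p s (h2 := D)) => [|a]; rewrite /D ?setUA ?setUid ?setU1D1; ring.
apply: (Ex_gt0 (w := w)) => // [a|]; last by rewrite /D /indic w1 (negbTE w2); lra.
rewrite /D /indic; case: ifP => h1; case: ifP => h2; try lra.
by rewrite (hE _ _ h2 (subD1U x a)) in h1.
Qed.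

(* A strict Harris inequality: conditioning on [x] leaves a covariance that is
   nonnegative by Harris, and the toggle of [x] adds a strictly positive term. *)
Lemma pivotal_cov_gt0 E F x : increasing_event E -> increasing_event F ->
  0 < p x < 1 -> pivotal E x -> pivotal F x ->
  Ex (indic E) * Ex (indic F) < Ex (fun a => indic E a * indic F a).
Proof.
move=> hE hF hx pE pF.
set s := rem x (index_enum G).
have us : uniq (x :: s).
  rewrite /= rem_uniq ?index_enum_uniq // andbT /s.
  by rewrite mem_rem_uniq ?index_enum_uniq // inE eqxx.
have alls y : y \in x :: s.
  rewrite inE /s mem_rem_uniq ?index_enum_uniq // inE mem_index_enum andbT.
  by case: (y == x).
rewrite !(Ex_Epart p _ set0 us alls) /= !set0D.
set F1 := Epart s (indic E) (x |: set0); set F0 := Epart s (indic E) set0.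
set G1 := Epart s (indic F) (x |: set0); set G0 := Epart s (indic F) set0.
have cond_harris w : Epart s (indic E) w * Epart s (indic F) w <=
                     Epart s (fun a => indic E a * indic F a) w.
  by apply: harris_Epart_incr => //; apply: indic_incr.
have := pivotal_gain hE pE us alls; have := pivotal_gain hF pF us alls.
rewrite -/F1 -/F0 -/G1 -/G0 => gG gF.
have h1 := cond_harris (x |: set0); have h0 := cond_harris set0.
have : 0 < p x * (1 - p x) * ((F1 - F0) * (G1 - G0)).
  by apply: Rmult_lt_0_compat; apply: Rmult_lt_0_compat; lra.
have := Rmult_le_compat_l (p x) _ _ ltac:(lra) h1.
have := Rmult_le_compat_l (1 - p x) _ _ ltac:(lra) h0.
rewrite -/F1 -/F0 -/G1 -/G0; nra.
Qed.

Lemma independent_not_pivotal E F x :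
  increasing_event E -> increasing_event F -> independent p E F ->
  0 < p x < 1 -> pivotal E x -> ~ pivotal F x.
Proof.
move=> hE hF indEF hx pE pF; have := pivotal_cov_gt0 hE hF hx pE pF.
rewrite -(eq_Ex (fun a => indic_setI E F a)) -!Pr_Ex indEF; lra.
Qed.

End Independence.

Lemma derivable_pt_lim_sum_exp (T : Type) (r : seq T) (c x : T -> R) s :
  derivable_pt_lim (fun s => \big[Rplus/0]_(A <- r) (c A * exp (- s * x A))) s
    (\big[Rplus/0]_(A <- r) (c A * (- x A * exp (- s * x A)))).
Proof.
elim: r => [|A r IH].
  rewrite big_nil; have := derivable_pt_lim_const 0 s.
  by apply: derivable_pt_lim_ext => u; rewrite big_nil.
rewrite big_cons; apply: (derivable_pt_lim_ext _ _ _ _ (fun u => esym (big_cons _ _ _ _ _ _))).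
apply: derivable_pt_lim_plus => //; apply: derivable_pt_lim_scal.
have -> : - x A * exp (- s * x A) = exp (- s * x A) * (- x A * 1) by ring.
apply: (derivable_pt_lim_comp (fun s => - s * x A) exp); last exact: derivable_pt_lim_exp.
have := derivable_pt_lim_scal id (- x A) s 1 (derivable_pt_lim_id s).
by apply: derivable_pt_lim_ext => u; rewrite /mult_real_fct /id; ring.
Qed.

(* [psi * exp (a s - Th s^2 / 2)] is nonincreasing, by the mean value theorem. *)
Lemma exp_quadratic_bound (psi psi' : R -> R) (a Th : R) :
  (forall s, derivable_pt_lim psi s (psi' s)) -> psi 0 = 1 ->
  (forall s, 0 <= s -> psi' s <= - (psi s * (a - Th * s))) ->
  forall s, 0 <= s -> psi s <= exp (- (a * s) + Th * s ^ 2 / 2).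
Proof.
move=> dpsi psi0 dineq s s0.
set g := fun s : R => a * s + (- Th / 2) * (s * s).
have dg u : derivable_pt_lim g u (a - Th * u).
  have -> : a - Th * u = a * 1 + (- Th / 2) * (1 * u + u * 1) by field.
  apply: derivable_pt_lim_plus; apply: derivable_pt_lim_scal.
    exact: derivable_pt_lim_id.
  by apply: (derivable_pt_lim_mult id id); apply: derivable_pt_lim_id.
set k := fun s => psi s * exp (g s).
set k' := fun s => psi' s * exp (g s) + psi s * (exp (g s) * (a - Th * s)).
have dk u : derivable_pt_lim k u (k' u).
  apply: derivable_pt_lim_mult => //.
  by apply: (derivable_pt_lim_comp g exp) => //; apply: derivable_pt_lim_exp.
have k0 : k 0 = 1.
  by rewrite /k /g psi0 (_ : a * 0 + - Th / 2 * (0 * 0) = 0) ?exp_0; ring.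
have dk_le0 u : 0 <= u -> k' u <= 0.
  move=> u0; have := dineq u u0; have := exp_pos (g u) => ep.
  rewrite /k' (_ : psi' u * _ + _ = exp (g u) * (psi' u + psi u * (a - Th * u))).
    by move=> h; nra.
  by ring.
have ks : k s <= 1.
  case: (Rle_lt_or_eq_dec _ _ s0) => [sp|<-]; last by rewrite k0; lra.
  have [c [hc c_in]] := MVT_cor2 k k' 0 s sp (fun c _ => dk c).
  have := dk_le0 c ltac:(lra); nra.
have -> : exp (- (a * s) + Th * s ^ 2 / 2) = exp (- g s) by congr exp; rewrite /g; field.
have e1 : exp (g s) * exp (- g s) = 1 by rewrite -exp_plus Rplus_opp_r exp_0.
have := Rmult_le_compat_r _ _ _ (Rlt_le _ _ (exp_pos (- g s))) ks.
by rewrite /k Rmult_assoc e1; lra.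
Qed.

Lemma INR_card_set (K : finType) (P : pred K) :
  INR #|[set k | P k]| = \big[Rplus/0]_(k : K) (if P k then 1 else 0).
Proof. by rewrite cardsE -sum1_card (big_morph INR plus_INR (erefl (INR 0))) big_mkcond. Qed.

Section Bonferroni.
Variables (G J : finType) (E : J -> event G) (a : {set G}).

Lemma indic01 (F : event G) : indic F a = 0 \/ indic F a = 1.
Proof. by rewrite /indic; case: ifP; auto. Qed.

Lemma sum_indic_pairs (n := \big[Rplus/0]_(j : J) indic (E j) a) :
  \big[Rplus/0]_(j : J) \big[Rplus/0]_(k : J | k != j) (indic (E j) a * indic (E k) a)
  = n * n - n.
Proof.
have -> : n * n - n = \big[Rplus/0]_(j : J) (indic (E j) a * (n - indic (E j) a)).
  rewrite (eq_bigr (fun j => n * indic (E j) a + (-1) * indic (E j) a)).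
    by rewrite big_split /= !sumR_mull -/n; ring.
  by move=> j _; case: (indic01 (E j)) => ->; ring.
apply: eq_bigr => j _; rewrite sumR_mull /n [in RHS](bigD1 j) /=; [ring | by []].
Qed.

Lemma sum_indic_nat : exists m, \big[Rplus/0]_(j : J) indic (E j) a = INR m.
Proof.
apply: (big_ind (fun x => exists m, x = INR m)) => [|x y [m ->] [n ->]|j _].
- by exists 0%nat.
- by exists (m + n)%nat; rewrite plus_INR.
- by case: (indic01 (E j)) => ->; [exists 0%nat | exists 1%nat].
Qed.

(* Second Bonferroni inequality; [n - n (n - 1) / 2 <= 1] because
   [(n - 1) (n - 2) >= 0] for every natural [n]. *)
Lemma indic_bigcup_ge :
  \big[Rplus/0]_(j : J) indic (E j) a
  - / 2 * \big[Rplus/0]_(j : J) \big[Rplus/0]_(k : J | k != j) (indic (E j) a * indic (E k) a)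
  <= indic (\bigcup_(j : J) E j) a.
Proof.
rewrite sum_indic_pairs [X in _ <= X]/indic; case: ifPn => [_|aE].
  have [m ->] := sum_indic_nat.
  suff : 0 <= (INR m - 1) * (INR m - 2) by nra.
  case: m => [|[|[|m]]]; rewrite ?S_INR /=; try lra.
  by have := pos_INR m; nra.
have -> : \big[Rplus/0]_(j : J) indic (E j) a = 0.
  by apply: big1 => j _; rewrite /indic; case: ifP => // aj; case/bigcupP: aE; exists j.
lra.
Qed.
End Bonferroni.

Lemma increasing_setI (G : finType) (E F : event G) :
  increasing_event E -> increasing_event F -> increasing_event (E :&: F).
Proof.
move=> hE hF A A'; rewrite !inE => /andP [AE AF] AA'.
by rewrite (hE _ _ AE AA') (hF _ _ AF AA').
Qed.

Lemma increasing_bigcup (G J : finType) (P : pred J) (E : J -> event G) :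
  (forall j, increasing_event (E j)) -> increasing_event (\bigcup_(j | P j) E j).
Proof.
move=> hE A A' /bigcupP [j Pj AE] AA'; apply/bigcupP; exists j => //.
exact: hE _ _ AE AA'.
Qed.

Lemma decr_exp_neg (G : finType) (f : {set G} -> R) s :
  0 <= s -> incr_fun f -> decr_fun (fun a => exp (- s * f a)).
Proof. by move=> s0 hf a b ab; apply: exp_le; have := hf a b ab; nra. Qed.

Section Janson.
Variables (G I J : finType) (p : G -> R) (B : I -> J -> event G).
Hypothesis hp : forall x, 0 <= p x <= 1.
Hypothesis hinc : forall i j, increasing_event (B i j).
Local Notation Ex := (Ex p).
Local Notation X := (Xval B).

Lemma Xval_sum a : X a = \big[Rplus/0]_(i : I) indic (Bi B i) a.
Proof. by rewrite /Xval INR_card_set. Qed.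

Lemma increasing_Bi i : increasing_event (Bi B i).
Proof. exact: increasing_bigcup. Qed.

Lemma Xval_incr : incr_fun X.
Proof.
move=> a b ab; rewrite !Xval_sum; apply: sumR_le => i _.
apply: indic_incr ab. exact: increasing_Bi.
Qed.

Definition expX s a := exp (- s * X a).

Lemma expX_ge0 s a : 0 <= expX s a.
Proof. exact/Rlt_le/exp_pos. Qed.

Lemma Ex_indic_Bi_expX_ge i s : 0 <= s ->
  \big[Rplus/0]_(j : J) Ex (fun a => indic (B i j) a * expX s a)
  - / 2 * \big[Rplus/0]_(j : J) \big[Rplus/0]_(k : J | k != j)
            (Pr p (B i j :&: B i k) * Ex (expX s))
  <= Ex (fun a => indic (Bi B i) a * expX s a).
Proof.
move=> s0.
set lhs := fun a => \big[Rplus/0]_(j : J) (indic (B i j) a * expX s a)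
  - / 2 * \big[Rplus/0]_(j : J) \big[Rplus/0]_(k : J | k != j)
                 (indic (B i j :&: B i k) a * expX s a).
have pointwise : Ex lhs <= Ex (fun a => indic (Bi B i) a * expX s a).
  apply: (Ex_le hp) => a; have h := Rmult_le_compat_r _ _ _ (expX_ge0 s a) (indic_bigcup_ge (B i) a).
  have e1 : \big[Rplus/0]_(j : J) (indic (B i j) a * expX s a) =
            expX s a * \big[Rplus/0]_(j : J) indic (B i j) a.
    by rewrite -sumR_mull; apply: eq_bigr => j _; ring.
  have e2 : \big[Rplus/0]_(j : J) \big[Rplus/0]_(k : J | k != j)
              (indic (B i j :&: B i k) a * expX s a) =
            expX s a * \big[Rplus/0]_(j : J) \big[Rplus/0]_(k : J | k != j)
              (indic (B i j) a * indic (B i k) a).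
    rewrite -sumR_mull; apply: eq_bigr => j _; rewrite -sumR_mull.
    by apply: eq_bigr => k _; rewrite indic_setI; ring.
  by rewrite /lhs /Bi e1 e2; lra.
apply: Rle_trans pointwise; rewrite /lhs Ex_subZ !Ex_sum.
suff : \big[Rplus/0]_(j : J)
         Ex (fun a => \big[Rplus/0]_(k : J | k != j) (indic (B i j :&: B i k) a * expX s a))
       <= \big[Rplus/0]_(j : J) \big[Rplus/0]_(k : J | k != j)
            (Pr p (B i j :&: B i k) * Ex (expX s)) by lra.
apply: sumR_le => j _; rewrite Ex_sum; apply: sumR_le => k _.
rewrite Pr_Ex; apply: (harris hp); last exact: decr_exp_neg Xval_incr.
exact/indic_incr/increasing_setI.
Qed.

(* Split the [k]-th term of [X] according to whether some [B k l] is
   dependent on [B i j]: the dependent part is controlled by [Theta_bar], the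
   independent part [indep_count] is independent of [B i j]. *)
Definition dep_union i j k := \bigcup_(l | rel_dep p B i j k l) B k l.
Definition indep_union i j k := \bigcup_(l | ~~ rel_dep p B i j k l) B k l.
Definition dep_count i j a := \big[Rplus/0]_(k : I) indic (dep_union i j k) a.
Definition indep_count i j a := \big[Rplus/0]_(k : I) indic (indep_union i j k) a.
Definition expV i j s a := exp (- s * indep_count i j a).

Lemma independent_of_not_rel_dep i j k l : ~~ rel_dep p B i j k l ->
  independent p (B i j) (B k l).
Proof. by rewrite /rel_dep negb_or /dependentb => /andP [_]; case: Req_EM_T. Qed.

Lemma Ex_indic_expV i j s :
  Ex (fun a => indic (B i j) a * expV i j s a) = Pr p (B i j) * Ex (expV i j s).
Proof.
rewrite Pr_Ex; apply: (Ex_mul hp) => x hx.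
case: (classic (pivotal p (B i j) x)) => piv; last first.
  by left => a sa; rewrite /indic (not_pivotal_flip (@hinc i j) piv sa).
right => a sa; rewrite /expV /indep_count; congr (exp (_ * _)).
apply: eq_bigr => k _; rewrite /indic.
suff -> : (x |: a \in indep_union i j k) = (a :\ x \in indep_union i j k) by [].
apply/bigcupP/bigcupP => -[l nrel al]; exists l => //;
  have npiv := independent_not_pivotal hp (@hinc i j) (@hinc k l)
                 (independent_of_not_rel_dep nrel) hx piv.
  by rewrite -(not_pivotal_flip (@hinc k l) npiv sa).
by rewrite (not_pivotal_flip (@hinc k l) npiv sa).
Qed.

Lemma Xval_le_dep_indep i j a : X a <= dep_count i j a + indep_count i j a.
Proof.
rewrite Xval_sum -big_split; apply: sumR_le => k _ /=; rewrite /indic.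
case: ifP => [/bigcupP [l _ al] | _]; last by do 2 case: ifP => _; lra.
case: (boolP (rel_dep p B i j k l)) => rel.
  have -> : a \in dep_union i j k by apply/bigcupP; exists l.
  by case: ifP => _; lra.
have -> : a \in indep_union i j k by apply/bigcupP; exists l.
by case: ifP => _; lra.
Qed.

Lemma indep_count_le_Xval i j a : indep_count i j a <= X a.
Proof.
rewrite Xval_sum; apply: sumR_le => k _; rewrite /indic.
case: ifP => [/bigcupP [l _ al] | _]; last by case: ifP => _; lra.
have -> : a \in Bi B k by apply/bigcupP; exists l.
rewrite /=; lra.
Qed.

Lemma indic_expX_ge i j s a : 0 <= s ->
  indic (B i j) a * expV i j s a
  - s * \big[Rplus/0]_(k : I) (indic (B i j :&: dep_union i j k) a * expV i j s a)
  <= indic (B i j) a * expX s a.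
Proof.
move=> s0.
have -> : \big[Rplus/0]_(k : I) (indic (B i j :&: dep_union i j k) a * expV i j s a)
          = indic (B i j) a * expV i j s a * dep_count i j a.
  by rewrite /dep_count -sumR_mull; apply: eq_bigr => k _; rewrite indic_setI; ring.
have split_exp : exp (- s * dep_count i j a) * expV i j s a <= expX s a.
  rewrite /expV /expX -exp_plus; apply: exp_le.
  by have := Xval_le_dep_indep i j a; nra.
have IV0 : 0 <= indic (B i j) a * expV i j s a.
  by apply: Rmult_le_pos; [apply: indic_ge0 | apply/Rlt_le/exp_pos].
have := Rmult_le_compat_l _ _ _ IV0 (exp_ineq1_le (- s * dep_count i j a)).
have := Rmult_le_compat_l _ _ _ (indic_ge0 (B i j) a) split_exp.
nra.
Qed.

Lemma Ex_indic_expX_ge_expV i j s : 0 <= s ->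
  Ex (expV i j s) *
    (Pr p (B i j) - s * \big[Rplus/0]_(k : I) Pr p (B i j :&: dep_union i j k))
  <= Ex (fun a => indic (B i j) a * expX s a).
Proof.
move=> s0; apply: Rle_trans (Ex_le hp (fun a => indic_expX_ge i j a s0)).
rewrite Ex_subZ Ex_sum Ex_indic_expV.
suff : \big[Rplus/0]_(k : I) Ex (fun a => indic (B i j :&: dep_union i j k) a * expV i j s a)
       <= Ex (expV i j s) * \big[Rplus/0]_(k : I) Pr p (B i j :&: dep_union i j k) by nra.
rewrite -sumR_mull; apply: sumR_le => k _; rewrite Pr_Ex Rmult_comm.
apply: (harris hp); last by apply: decr_exp_neg => // a b ab; apply: sumR_le => k' _;
  apply: (indic_incr _ ab); apply: increasing_bigcup.
exact/indic_incr/increasing_setI/increasing_bigcup.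
Qed.

Lemma Ex_indic_expX_ge i j s : 0 <= s ->
  Ex (expX s) *
    (Pr p (B i j) - s * \big[Rplus/0]_(k : I) Pr p (B i j :&: dep_union i j k))
  <= Ex (fun a => indic (B i j) a * expX s a).
Proof.
move=> s0; set c := _ - _.
have le_expV : Ex (expX s) <= Ex (expV i j s).
  apply: (Ex_le hp) => a; apply: exp_le.
  by have := indep_count_le_Xval i j a; nra.
have := Ex_indic_expX_ge_expV i j s0; rewrite -/c.
have : 0 <= Ex (expX s) by apply: (Ex_ge0 hp) => a; apply: expX_ge0.
have : 0 <= Ex (fun a => indic (B i j) a * expX s a).
  by apply: (Ex_ge0 hp) => a; apply: Rmult_le_pos; [apply: indic_ge0 | apply: expX_ge0].
case: (Rle_lt_dec 0 c) => hc; nra.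
Qed.

Lemma Ex_X_expX_ge s : 0 <= s ->
  Ex (expX s) * (mu p B - gamma p B - s * Theta_bar p B) <= Ex (fun a => X a * expX s a).
Proof.
move=> s0; set psi := Ex (expX s).
set P := fun i j => Pr p (B i j).
set Q := fun i j => \big[Rplus/0]_(k : I) Pr p (B i j :&: dep_union i j k).
set R2 := fun i => \big[Rplus/0]_(j : J) \big[Rplus/0]_(k : J | k != j) Pr p (B i j :&: B i k).
have -> : Ex (fun a => X a * expX s a) =
          \big[Rplus/0]_(i : I) Ex (fun a => indic (Bi B i) a * expX s a).
  rewrite -Ex_sum; apply: eq_Ex => a; rewrite Xval_sum Rmult_comm -sumR_mull.
  by apply: eq_bigr => i _; ring.
have per_i i : psi * (\big[Rplus/0]_(j : J) P i j) + (- s * psi) * (\big[Rplus/0]_(j : J) Q i j)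
               + (- psi) * (/ 2 * R2 i)
               <= Ex (fun a => indic (Bi B i) a * expX s a).
  apply: Rle_trans (Ex_indic_Bi_expX_ge i s0).
  have -> : \big[Rplus/0]_(j : J) \big[Rplus/0]_(k : J | k != j)
              (Pr p (B i j :&: B i k) * psi) = psi * R2 i.
    rewrite -sumR_mull; apply: eq_bigr => j _; rewrite -sumR_mull.
    by apply: eq_bigr => k _; ring.
  suff : psi * (\big[Rplus/0]_(j : J) P i j) + (- s * psi) * (\big[Rplus/0]_(j : J) Q i j)
         <= \big[Rplus/0]_(j : J) Ex (fun a => indic (B i j) a * expX s a) by lra.
  rewrite -(sumR_mull _ _ psi) -(sumR_mull _ _ (- s * psi)) -big_split.
  apply: sumR_le => j _ /=.
  by apply: Rle_trans (Ex_indic_expX_ge i j s0); right; rewrite /P /Q /psi; ring.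
apply: Rle_trans (sumR_le _ (fun i _ => per_i i)).
rewrite !big_split /= !sumR_mull /mu /gamma /Theta_bar sumR_mull.
by right; rewrite /P /Q /R2 /dep_union; ring.
Qed.

Lemma mu_le_Theta_bar : mu p B <= Theta_bar p B.
Proof.
apply: sumR_le => i _; apply: sumR_le => j _; rewrite (bigD1 i) //=.
have -> : B i j :&: \bigcup_(l | rel_dep p B i j i l) B i l = B i j.
  by apply/setIidPl/bigcup_sup; rewrite /rel_dep !eqxx.
suff : 0 <= \big[Rplus/0]_(k | k != i)
              Pr p (B i j :&: \bigcup_(l | rel_dep p B i j k l) B k l) by lra.
by apply: sumR_ge0 => k _; apply: Pr_ge0.
Qed.

(* A union bound, term by term. *)
Lemma Theta_bar_le_Delta_bar : Theta_bar p B <= Delta_bar p B.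
Proof.
apply: sumR_le => i _; apply: sumR_le => j _; apply: sumR_le => k _.
rewrite Pr_Ex (eq_bigr (fun l => Ex (indic (B i j :&: B k l)))) => [|l _]; last exact: Pr_Ex.
rewrite -Ex_sum; apply: (Ex_le hp) => a; rewrite {1}/indic.
case: ifP => [|_]; last by apply: sumR_ge0 => l _; apply: indic_ge0.
rewrite inE => /andP [aBij /bigcupP [l rel aBkl]]; rewrite (bigD1 l) //=.
have -> : indic (B i j :&: B k l) a = 1 by rewrite /indic inE aBij aBkl.
suff : 0 <= \big[Rplus/0]_(l' | rel_dep p B i j k l' && (l' != l)) indic (B i j :&: B k l') a.
  by lra.
by apply: sumR_ge0 => l' _; apply: indic_ge0.
Qed.

Lemma Pr_lower_tail_le t s : 0 <= s ->
  Pr p (lower_tail p B t) <= exp (s * (mu p B - t)) * Ex (expX s).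
Proof.
move=> s0; rewrite Pr_Ex -Ex_Zl; apply: (Ex_le hp) => a.
rewrite /expX -exp_plus /indic /lower_tail inE.
case: Rle_dec => [Xle|_] /=; last exact/Rlt_le/exp_pos.
by rewrite -exp_0; apply: exp_le; nra.
Qed.

Lemma Ex_expX_le s : 0 <= s ->
  Ex (expX s) <= exp (- ((mu p B - gamma p B) * s) + Theta_bar p B * s ^ 2 / 2).
Proof.
move=> s0.
set psi' := fun s => \big[Rplus/0]_(A : {set G}) (weight p A * (- X A * exp (- s * X A))).
apply: (exp_quadratic_bound (psi := fun s => Ex (expX s)) (psi' := psi')) => [u||u u0|//].
- exact: derivable_pt_lim_sum_exp.
- by rewrite -(Ex_const p 1); apply: eq_Ex => a; rewrite /expX Ropp_0 Rmult_0_l exp_0.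
have -> : psi' u = -1 * Ex (fun a => X a * expX u a).
  by rewrite -Ex_Zl; apply: eq_bigr => A _; rewrite /expX; ring.
by have := Ex_X_expX_ge u0; lra.
Qed.

End Janson.

Theorem mainTheorem4 (G I J : finType) (p : G -> R) (B : I -> J -> event G)
  (hp : forall x : G, 0 <= p x <= 1)
  (hinc : forall (i : I) (j : J), increasing_event (B i j))
  (hmu : 0 < mu p B) (t : R)
  (ht : gamma p B <= t <= mu p B) :
  Pr p (lower_tail p B t) <= exp (- ((t - gamma p B) ^ 2 / (2 * Theta_bar p B))) /\
  exp (- ((t - gamma p B) ^ 2 / (2 * Theta_bar p B)))
    <= exp (- ((t - gamma p B) ^ 2 / (2 * Delta_bar p B))).
Proof.
have muTh := mu_le_Theta_bar B hp.
have ThDl := Theta_bar_le_Delta_bar B hp.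
set g := gamma p B in ht *; set m := mu p B in hmu ht muTh *.
set Th := Theta_bar p B in muTh ThDl *; set Dl := Delta_bar p B in ThDl *.
split; last first.
  apply/exp_le/Ropp_le_contravar/Rmult_le_compat_l; first exact: pow2_ge_0.
  by apply: Rinv_le_contravar; lra.
set s := (t - g) / Th.
have s0 : 0 <= s by apply: Rmult_le_pos; [lra | apply/Rlt_le/Rinv_0_lt_compat; lra].
apply: Rle_trans (Pr_lower_tail_le B hp t s0) _.
apply: Rle_trans (Rmult_le_compat_l _ _ _ (Rlt_le _ _ (exp_pos _)) (Ex_expX_le hp hinc s0)) _.
by rewrite -exp_plus; right; congr exp; rewrite /s -/m -/g -/Th; field; lra.
Qed.
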